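(* Fix $\mathbf{x} \in \Omega$, $\alpha \in [0,1)$, and a total preorder $R$ on $\Omega$ with $\mathcal{F}(\Omega(\mathbf{x},R),\alpha)$ nonempty. Suppose there exists a set $C \subseteq S$ such that for any $G, H \in \mathcal{F}$ agreeing both cumulatively and pointwise on $C$, $P_G[\Omega(\mathbf{x},R)] = P_H[\Omega(\mathbf{x},R)]$. Then $$B_R^*(\mathbf{x}) = \min\{E[F] : F \in \mathcal{F}_{C^+}(\Omega(\mathbf{x},R),\alpha)\}.$$
   Context: Fix integers $m \ge 2$, $n \ge 1$ and reals $S_{\min} < S_{\max}$; $S = \{S_0,\dots,S_{m-1}\}$ with $S_k = S_{\min} + k\frac{S_{\max}-S_{\min}}{m-1}$. $\mathcal{F}$ is the set of probability distributions on $S$, identified with the probability simplex in $\mathbb{R}^m$ with the Euclidean topology; $E[F]$ is the mean. $\Omega$ is the set of samples of size $n$ from $S$, identified with their sorted versions. $P_F[\Omega']$ is the probability that the sorted sample of $n$ i.i.d. draws from $F$ lies in $\Omega' \subseteq \Omega$; $\mathcal{G}(\Omega',\alpha) = \{F : P_F[\Omega'] > \alpha\}$ and $\mathcal{F}(\Omega',\alpha)$ is its closure. A total preorder $R$ on $\Omega$ is a reflexive, transitive, total relation $\lesssim_R$; $\Omega(\mathbf{x},R) = \{\mathbf{y} : \mathbf{x} \lesssim_R \mathbf{y}\}$; $B_R^*(\mathbf{x}) = \min\{E[F] : F \in \mathcal{F}(\Omega(\mathbf{x},R),\alpha)\}$. For $C \subseteq S$: $G,H \in \mathcal{F}$ agree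 pointwise on $C$ if $P_G[X = s] = P_H[X = s]$ for all $s \in C$, and cumulatively on $C$ if $P_G[X \le s] = P_H[X \le s]$ for all $s \in C$ ($X$ a single draw). The refinement $\mathcal{F}_C = \{F \in \mathcal{F} : P_F[X = s] = 0 \ \forall s \in S\setminus C\}$, $\mathcal{G}_C(\Omega',\alpha) = \mathcal{F}_C \cap \mathcal{G}(\Omega',\alpha)$, and $\mathcal{F}_C(\Omega',\alpha)$ is the closure of $\mathcal{G}_C(\Omega',\alpha)$. The augmentation is $C^+ = C \cup \{S_{\min}\} \cup \{S_{j+1} : S_j \in C,\ j \le m-2\}$. *)

From HB Require Import structures.
From mathcomp Require Import all_boot all_order all_algebra.
From mathcomp Require Import all_classical all_reals all_analysis.
Set Implicit Arguments. Unset Strict Implicit. Unset Printing Implicit Defensive.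
Import Order.TTheory GRing.Theory Num.Theory.
Import numFieldNormedType.Exports.
Local Open Scope classical_set_scope.
Local Open Scope ring_scope.

Section Defs.
Variables (R : realType) (m n : nat).

Definition Spt (Smin Smax : R) (k : 'I_m) : R :=
  Smin + (k%:R) * ((Smax - Smin) / (m.-1)%:R).

(* A distribution on S is a row vector in R^m; pr F k = P_F[X = S_k]. *)
Definition pr (F : 'rV[R]_m) (k : 'I_m) : R := F ord0 k.

Definition simplex : set 'rV[R]_m :=
  [set F | (forall k, 0 <= pr F k) /\ \sum_(k < m) pr F k = 1].

Definition mean (Smin Smax : R) (F : 'rV[R]_m) : R :=
  \sum_(k < m) pr F k * Spt Smin Smax k.

(* Samples of size n from S, identified with their sorted versions
   (nondecreasing n-tuples of indices). *)
Definition ordle (i j : 'I_m) : bool := (i <= j)%N.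
Definition Omega := {s : n.-tuple 'I_m | sorted ordle s}.

(* P_F[Om']: probability that the sorted sample of n iid draws from F lies in Om'. *)
Definition PF (F : 'rV[R]_m) (Om' : Omega -> bool) : R :=
  \sum_(x : n.-tuple 'I_m |
          [exists w : Omega, Om' w && (val (val w) == sort ordle x)])
     \prod_(i < n) pr F (tnth x i).

Definition calG (Om' : Omega -> bool) (alpha : R) : set 'rV[R]_m :=
  [set F | simplex F /\ alpha < PF F Om'].
Definition calF (Om' : Omega -> bool) (alpha : R) : set 'rV[R]_m :=
  closure (calG Om' alpha).

Definition calF_C (C : {set 'I_m}) : set 'rV[R]_m :=
  [set F | simplex F /\ forall k, k \notin C -> pr F k = 0].
Definition calG_C (C : {set 'I_m}) (Om' : Omega -> bool) (alpha : R) :=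
  calF_C C `&` calG Om' alpha.
Definition calF_Cref (C : {set 'I_m}) (Om' : Omega -> bool) (alpha : R) :=
  closure (calG_C C Om' alpha).

Definition agree_pointwise (C : {set 'I_m}) (G H : 'rV[R]_m) :=
  forall k, k \in C -> pr G k = pr H k.
Definition agree_cumulative (C : {set 'I_m}) (G H : 'rV[R]_m) :=
  forall k, k \in C ->
    \sum_(j < m | (j <= k)%N) pr G j = \sum_(j < m | (j <= k)%N) pr H j.

Definition augment (C : {set 'I_m}) : {set 'I_m} :=
  [set k : 'I_m | [|| k \in C, (val k == 0)%N
                    | [exists j in C, (val j).+1 == val k]]].

End Defs.

Definition total_preorder (T : Type) (r : rel T) : Prop :=
  reflexive r /\ transitive r /\ total r.

Definition upset (T : Type) (r : rel T) (x : T) : T -> bool := fun y => r x y.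

Definition is_min (R : realType) (m : nat) (E : 'rV[R]_m -> R)
  (A : set 'rV[R]_m) (v : R) : Prop :=
  (exists F, A F /\ E F = v) /\ (forall F, A F -> v <= E F).

From HB Require Import structures.
From mathcomp Require Import all_boot all_order all_algebra.
From mathcomp Require Import all_classical all_reals all_analysis.
Import Order.TTheory GRing.Theory Num.Theory.
Import numFieldNormedType.Exports.
Set Implicit Arguments. Unset Strict Implicit. Unset Printing Implicit Defensive.
Local Open Scope classical_set_scope.
Local Open Scope ring_scope.

(* Move the mass at each S_k down to the largest point of C^+ below S_k.
   This continuous linear map sends distributions to distributions supported
   on C^+, does not increase the mean, and agrees with the identity both
   cumulatively and pointwise on C: for S_j in C the point S_(j+1) lies in C^+,
   so no mass crosses S_j. By hypothesis it therefore preserves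
   P_F[Omega(x,R)], so it maps G(Omega(x,R), alpha) into its C^+-refinement and,
   by continuity, F(Omega(x,R), alpha) into F_(C^+)(Omega(x,R), alpha), a subset
   of F(Omega(x,R), alpha). The latter is compact, so the mean attains its
   minimum there at some F, and the image of F attains the same value on the
   refinement. *)

Lemma lipschitz_continuous (R : realFieldType) (V W : normedModType R)
    (f : V -> W) (k : R) :
  (forall a b, `|f a - f b| <= k * `|a - b|) -> continuous f.
Proof.
move=> fk x; apply/cvgrPdist_lt => e e_gt0.
have k1_gt0 : 0 < `|k| + 1 by rewrite ltr_wpDl.
apply/nbhs_ballP; exists (e / (`|k| + 1)) => /=; first exact: divr_gt0.
move=> y; rewrite -ball_normE /ball_ /= => xy_lt.
apply: le_lt_trans (fk x y) _.
apply: le_lt_trans (_ : _ <= (`|k| + 1) * `|x - y|) _.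
  by rewrite ler_wpM2r // (le_trans (ler_norm k)) // lerDl.
by rewrite -ltr_pdivlMl // mulrC.
Qed.

Lemma closure_sub_preimage {T U : topologicalType} {f : T -> U}
    {A : set T} {D : set U} :
  continuous f -> closed D -> A `<=` f @^-1` D -> closure A `<=` f @^-1` D.
Proof.
move=> f_cont D_closed AD.
have /closure_id -> : closed (f @^-1` D).
  by move/continuous_closedP: f_cont; apply.
exact: closureS.
Qed.

Section RowVectors.
Variables (R : realFieldType) (m : nat).
Implicit Types F G : 'rV[R]_m.

Lemma row_coord_le_norm F k : `|F ord0 k| <= `|F|.
Proof.
rewrite [`|F|]mx_normrE.
exact: (le_bigmax _ (fun ij : 'I_1 * 'I_m => `|F ij.1 ij.2|) (ord0, k)).
Qed.

Lemma row_norm_le F c : 0 <= c -> (forall k, `|F ord0 k| <= c) -> `|F| <= c.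
Proof.
move=> c_ge0 Fc; rewrite [`|F|]mx_normrE; apply: bigmax_le => // -[i j] _ /=.
by rewrite (ord1 i).
Qed.

Lemma weighted_sum_lipschitz (c : 'I_m -> R) F G :
  `|\sum_k F ord0 k * c k - \sum_k G ord0 k * c k|
    <= (\sum_k `|c k|) * `|F - G|.
Proof.
rewrite -sumrB mulr_suml; apply: le_trans (ler_norm_sum _ _ _) _.
apply: ler_sum => k _; rewrite -mulrBl normrM mulrC ler_wpM2l //.
by have := row_coord_le_norm (F - G) k; rewrite !mxE.
Qed.

Lemma weighted_sum_continuous (c : 'I_m -> R) :
  continuous (fun F => \sum_k F ord0 k * c k).
Proof. exact: lipschitz_continuous (weighted_sum_lipschitz c). Qed.

End RowVectors.

Section Distributions.
Variables (R : realType) (m : nat).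
Implicit Types F G : 'rV[R]_m.

Lemma simplex_closed : closed (@simplex R m).
Proof.
move=> F F_cl; split=> [k|].
  have simplex_ge0 :
      @simplex R m `<=` (fun G : 'rV[R]_m => G ord0 k) @^-1` [set x | 0 <= x].
    by move=> G [G_ge0 _]; exact: G_ge0.
  exact: (closure_sub_preimage (@coord_continuous R 1 m ord0 k)
    (@closed_ge R 0) simplex_ge0 F_cl).
pose total G := \sum_k G ord0 k * (1 : R).
have simplex_total : @simplex R m `<=` total @^-1` [set x | x = 1].
  by move=> G [_ G1]; rewrite /total /=; under eq_bigr do rewrite mulr1.
have := closure_sub_preimage (@weighted_sum_continuous R m (fun=> 1))
  (@closed_eq R 1) simplex_total F_cl.
by rewrite /preimage /total /=; under eq_bigr do rewrite mulr1.
Qed.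

Lemma simplex_norm_le1 F : simplex F -> `|F| <= 1.
Proof.
move=> [F_ge0 F1]; apply: row_norm_le => // k; rewrite -/(pr F k) ger0_norm //.
by rewrite -F1 (bigD1 k) //= lerDl sumr_ge0.
Qed.

Lemma calF_sub_simplex n (Om : Omega m n -> bool) (alpha : R) :
  calF Om alpha `<=` @simplex R m.
Proof.
rewrite [X in _ `<=` X](closure_id _).1; last exact: simplex_closed.
by apply: closureS => F [].
Qed.

Lemma calF_compact n (Om : Omega m n -> bool) (alpha : R) :
  compact (calF Om alpha).
Proof.
apply: bounded_closed_compact; last exact: closed_closure.
apply: filterS (nbhs_pinfty_ge (num_real (1 : R))) => M M_ge1 F F_calF /=.
exact: le_trans (simplex_norm_le1 (calF_sub_simplex F_calF)) M_ge1.
Qed.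

Lemma calF_Cref_sub_calF n (A : {set 'I_m}) (Om : Omega m n -> bool)
    (alpha : R) :
  calF_Cref A Om alpha `<=` calF Om alpha.
Proof. by apply: closureS => F []. Qed.

Lemma Spt_le (Smin Smax : R) (i j : 'I_m) : Smin <= Smax -> (i <= j)%N ->
  Spt Smin Smax i <= Spt Smin Smax j.
Proof.
move=> S_le ij; rewrite /Spt lerD2l ler_wpM2r ?ler_nat //.
by rewrite divr_ge0 // subr_ge0.
Qed.

Lemma mean_continuous (Smin Smax : R) : continuous (@mean R m Smin Smax).
Proof. exact: weighted_sum_continuous. Qed.

End Distributions.

Section Pushforward.
Variables (R : realType) (m : nat) (f : 'I_m -> 'I_m).
Implicit Types F G : 'rV[R]_m.

Definition pushforward F : 'rV[R]_m := \row_j \sum_(k | f k == j) pr F k.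

Lemma pushforwardE F j :
  pr (pushforward F) j = \sum_k pr F k * (if f k == j then 1 else 0).
Proof.
rewrite /pr mxE big_mkcond; apply: eq_bigr => k _.
by case: ifP; rewrite ?mulr1 ?mulr0.
Qed.

Lemma sum_pushforward F (g : 'I_m -> R) (P : pred 'I_m) :
  \sum_(j | P j) pr (pushforward F) j * g j
    = \sum_(k | P (f k)) pr F k * g (f k).
Proof.
rewrite [RHS](partition_big f P) //; apply: eq_bigr => j Pj.
rewrite /pr mxE mulr_suml; apply: eq_big => [k | k /eqP <-] //.
by case: eqP => [->|]; rewrite ?Pj ?andbF.
Qed.

Lemma sum_pushforward1 F (P : pred 'I_m) :
  \sum_(j | P j) pr (pushforward F) j = \sum_(k | P (f k)) pr F k.
Proof.
under eq_bigr do rewrite -[pr _ _]mulr1.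
by rewrite (sum_pushforward F (fun=> 1)); under eq_bigr do rewrite mulr1.
Qed.

Lemma pushforward_simplex F : simplex F -> simplex (pushforward F).
Proof.
move=> [F_ge0 F1]; split=> [j|]; first by rewrite /pr mxE sumr_ge0.
by rewrite (sum_pushforward1 F xpredT).
Qed.

Lemma pushforward_continuous : continuous pushforward.
Proof.
apply: (@lipschitz_continuous _ _ _ _ m%:R) => F G.
apply: row_norm_le => [|j]; first by rewrite mulr_ge0.
have -> : (pushforward F - pushforward G) ord0 j =
    pr (pushforward F) j - pr (pushforward G) j.
  by rewrite [LHS]mxE [X in _ + X]mxE.
rewrite !pushforwardE.
apply: le_trans (weighted_sum_lipschitz _ F G) _; rewrite ler_wpM2r //.
rewrite -[m in m%:R]card_ord -sumr_const; apply: ler_sum => k _.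
by case: ifP; rewrite ?normr1 ?normr0.
Qed.

End Pushforward.

Section AugmentFloor.
Variables (m : nat) (C : {set 'I_m}).

(* The index 0 always lies in C^+, so it is a valid default for the arg max. *)
Definition aug_floor (k : 'I_m) : 'I_m :=
  [arg max_(j > Ordinal (leq_ltn_trans (leq0n k) (ltn_ord k))
           | (j <= k) && (j \in augment C)) val j]%N.

Lemma aug_floorP k :
  [/\ aug_floor k \in augment C, (aug_floor k <= k)%N
    & forall j : 'I_m, (j <= k)%N -> j \in augment C -> (j <= aug_floor k)%N].
Proof.
rewrite /aug_floor; case: arg_maxnP => [|i /andP[ik iA] i_max].
  by rewrite /= inE eqxx orbT.
by split=> // j jk jA; apply: i_max; rewrite jk jA.
Qed.

Lemma aug_floor_leC j k : j \in C -> (aug_floor k <= j)%N = (k <= j)%N.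
Proof.
move=> jC; have [_ fk f_max] := aug_floorP k.
apply/idP/idP => [fj|kj]; last exact: leq_trans fk kj.
rewrite leqNgt; apply/negP => jk.
have Sj_lt : (j.+1 < m)%N := leq_ltn_trans jk (ltn_ord k).
have Sj_aug : Ordinal Sj_lt \in augment C.
  by rewrite inE; apply/or3P/Or33/existsP; exists j; rewrite jC eqxx.
by have := f_max (Ordinal Sj_lt) jk Sj_aug; rewrite /= ltnNge fj.
Qed.

Lemma aug_floor_eqC j k : j \in C -> (aug_floor k == j) = (k == j).
Proof.
move=> jC; have [_ fk f_max] := aug_floorP k.
rewrite -!(inj_eq val_inj) /= !eqn_leq aug_floor_leC //.
case: (leqP k j) => //= kj; apply/idP/idP => [jf|jk]; first exact: leq_trans fk.
by apply: f_max jk _; rewrite inE jC.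
Qed.

End AugmentFloor.

Section Collapse.
Variables (R : realType) (m : nat) (C : {set 'I_m}).
Implicit Types F : 'rV[R]_m.

Definition collapse : 'rV[R]_m -> 'rV[R]_m := pushforward (aug_floor C).

Lemma collapse_support F k : k \notin augment C -> pr (collapse F) k = 0.
Proof.
move=> kA; rewrite /pr mxE big1 // => i /eqP fik.
by have [iA _ _] := aug_floorP C i; rewrite -fik iA in kA.
Qed.

Lemma collapse_agree_pointwise F : agree_pointwise C (collapse F) F.
Proof.
move=> j jC; rewrite /pr mxE (eq_bigl (eq_op^~ j)) ?big_pred1_eq // => k.
exact: aug_floor_eqC.
Qed.

Lemma collapse_agree_cumulative F : agree_cumulative C (collapse F) F.
Proof.
move=> j jC; rewrite sum_pushforward1; apply: eq_bigl => k.
exact: aug_floor_leC.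
Qed.

Lemma collapse_mean_le (Smin Smax : R) F : Smin <= Smax -> simplex F ->
  mean Smin Smax (collapse F) <= mean Smin Smax F.
Proof.
move=> S_le [F_ge0 _]; rewrite /mean (sum_pushforward _ _ _ xpredT).
apply: ler_sum => k _; rewrite ler_wpM2l // Spt_le //.
by have [] := aug_floorP C k.
Qed.

End Collapse.

Section CollapseCalF.
Variables (R : realType) (m n : nat) (C : {set 'I_m}).
Variables (Om : Omega m n -> bool) (alpha : R).
Hypothesis PF_agree : forall G H : 'rV[R]_m, simplex G -> simplex H ->
  agree_cumulative C G H -> agree_pointwise C G H -> PF G Om = PF H Om.

Lemma collapse_calG F :
  calG Om alpha F -> calG_C (augment C) Om alpha (collapse C F).
Proof.
move=> [F_simplex F_alpha].
have CF_simplex : simplex (collapse C F) by exact: pushforward_simplex.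
split; first by split=> //; exact: collapse_support.
split=> //; rewrite (PF_agree CF_simplex F_simplex) //.
  exact: collapse_agree_cumulative.
exact: collapse_agree_pointwise.
Qed.

Lemma collapse_calF F :
  calF Om alpha F -> calF_Cref (augment C) Om alpha (collapse C F).
Proof.
have calG_sub :
    calG Om alpha `<=` collapse C @^-1` calF_Cref (augment C) Om alpha.
  by move=> G /collapse_calG; exact: subset_closure.
move=> F_calF.
exact: closure_sub_preimage (@pushforward_continuous R m (aug_floor C))
  (@closed_closure _ _) calG_sub _ F_calF.
Qed.

End CollapseCalF.

Lemma is_min_transfer (R : realType) (m : nat) (E : 'rV[R]_m -> R)
    (K K' : set 'rV[R]_m) (t : 'rV[R]_m -> 'rV[R]_m) :
  K !=set0 -> compact K -> continuous E -> K' `<=` K ->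
  (forall F, K F -> K' (t F) /\ E (t F) <= E F) ->
  exists b, is_min E K b /\ is_min E K' b.
Proof.
move=> K_neq0 K_compact E_cont K'K tK.
have [F FK F_min] := EVT_min_rV K_neq0 K_compact (continuous_subspaceT E_cont).
rewrite in_setE in FK.
have {}F_min G : K G -> E F <= E G by move=> GK; apply: F_min; rewrite in_setE.
have [tFK' tF_le] := tK F FK.
exists (E F); split; split.
- by exists F.
- exact: F_min.
- exists (t F); split=> //; apply/eqP; rewrite eq_le tF_le F_min //.
  exact: K'K.
- by move=> G /K'K; exact: F_min.
Qed.

Theorem lemma9 (R : realType) (m n : nat) (Smin Smax : R)
  (x : Omega m n) (alpha : R) (rel_R : rel (Omega m n)) (C : {set 'I_m}) :
  (2 <= m)%N -> (1 <= n)%N -> Smin < Smax ->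
  0 <= alpha -> alpha < 1 ->
  total_preorder rel_R ->
  calF (upset rel_R x) alpha !=set0 ->
  (forall G H : 'rV[R]_m, simplex G -> simplex H ->
     agree_cumulative C G H -> agree_pointwise C G H ->
     PF G (upset rel_R x) = PF H (upset rel_R x)) ->
  exists b : R,
    is_min (mean Smin Smax) (calF (upset rel_R x) alpha) b /\
    is_min (mean Smin Smax) (calF_Cref (augment C) (upset rel_R x) alpha) b.
Proof.
move=> _ _ S_lt _ _ _ calF_neq0 PF_agree.
apply: (is_min_transfer (t := collapse C)) => //.
- exact: calF_compact.
- exact: mean_continuous.
- exact: calF_Cref_sub_calF.
move=> F F_calF; split; first exact: collapse_calF.
exact: collapse_mean_le (ltW S_lt) (calF_sub_simplex F_calF).
Qed.
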